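(* Let $r\le s$, $M$ the space of complex $r\times s$ matrices, $D_k\subset M$ the variety of matrices of rank at most $k$ ($0\le k<r$), and $p\ge0$ an integer. The contact locus $\mathrm{Cont}^{\ge p}(D_k)\subset M_\infty$ is invariant under $G_\infty$, and an orbit $O_\lambda$ ($\lambda$ a pre-partition of length at most $r$) is contained in $\mathrm{Cont}^{\ge p}(D_k)$ if and only if $\lambda_{r-k}+\dots+\lambda_r\ge p$.
   Context: $D_k$ is defined by the ideal $I_{D_k}$ of $(k+1)\times(k+1)$ minors. The $\mathbb{C}$-points of the arc space $M_\infty$ are $r\times s$ matrices over $\mathbb{C}[[t]]$; $G=GL_r\times GL_s$ acts on $M$ by $(g,h)\cdot A=gAh^{-1}$, and $G_\infty$ acts on $M_\infty$. For $\gamma\in M_\infty$ (viewed as $\mathrm{Spec}\,K[[t]]\to M$), $\mathrm{ord}_\gamma(I_{D_k})=e$ where $\gamma^*I_{D_k}=(t^e)$, $e\in\mathbb N\cup\{\infty\}$; $\mathrm{Cont}^{\ge p}(D_k)=\{\gamma:\mathrm{ord}_\gamma(I_{D_k})\ge p\}$. A pre-partition of length at most $r$ is $\lambda_1\ge\dots\ge\lambda_r\ge0$ in $\mathbb N\cup\{\infty\}$ (with $\infty>n$, $\infty+n=\infty$); $\delta_\lambda$ is the $r\times s$ matrix with first $s-r$ columns zero and last $r$ columns $\mathrm{diag}(t^{\lambda_1},\dots,t^{\lambda_r})$ ($t^\infty=0$); $O_\lambda=G_\infty\cdot\delta_\lambda$. *)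

From HB Require Import structures.
From mathcomp Require Import all_boot all_order all_algebra.
From mathcomp Require Import boolp.
From mathcomp Require Import complex.
From mathcomp Require Import Rstruct.

Set Implicit Arguments.
Unset Strict Implicit.
Unset Printing Implicit Defensive.

Import Order.TTheory GRing.Theory Num.Theory.
Local Open Scope ring_scope.

Definition Cplx : fieldType := (Rdefinitions.R)[i].

Record fps (K : fieldType) := FPS { fpscoef : nat -> K }.
Arguments FPS {K}.

Section FPS.
Variable K : fieldType.
Local Notation F := (fps K).

HB.instance Definition _ := gen_eqMixin F.
HB.instance Definition _ := gen_choiceMixin F.

Lemma fpsP (f g : F) : (forall n, fpscoef f n = fpscoef g n) -> f = g.
Proof. by case: f; case: g => g f /= H; congr FPS; apply: funext. Qed.

Definition fps0 : F := FPS (fun _ => 0).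
Definition fpsopp (f : F) : F := FPS (fun n => - fpscoef f n).
Definition fpsadd (f g : F) : F := FPS (fun n => fpscoef f n + fpscoef g n).

Lemma fpsaddA : associative fpsadd.
Proof. by move=> f g h; apply: fpsP => n /=; rewrite addrA. Qed.
Lemma fpsaddC : commutative fpsadd.
Proof. by move=> f g; apply: fpsP => n /=; rewrite addrC. Qed.
Lemma fpsadd0 : left_id fps0 fpsadd.
Proof. by move=> f; apply: fpsP => n /=; rewrite add0r. Qed.
Lemma fpsaddN : left_inverse fps0 fpsopp fpsadd.
Proof. by move=> f; apply: fpsP => n /=; rewrite addNr. Qed.

HB.instance Definition _ := GRing.isZmodule.Build F fpsaddA fpsaddC fpsadd0 fpsaddN.

Definition fpstr (f : F) (n : nat) : {poly K} := \poly_(i < n.+1) fpscoef f i.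

(** Cauchy product: the n-th coefficient of f*g is that of the product
    of the degree-n truncations *)
Definition fps1 : F := FPS (fun n => (n == 0)%:R).
Definition fpsmul (f g : F) : F := FPS (fun n => (fpstr f n * fpstr g n)`_n).

Lemma coefM_agree (p p' q q' : {poly K}) n :
  (forall i, (i <= n)%N -> p`_i = p'`_i) ->
  (forall i, (i <= n)%N -> q`_i = q'`_i) -> (p * q)`_n = (p' * q')`_n.
Proof.
move=> Hp Hq; rewrite !coefM; apply: eq_bigr => j _.
by rewrite Hp ?Hq ?leq_subr // -ltnS.
Qed.

Lemma fpstr_coef (f : F) n i : (i <= n)%N -> (fpstr f n)`_i = fpscoef f i.
Proof. by move=> H; rewrite coef_poly ltnS H. Qed.

Lemma fpstr_mul (f g : F) n i : (i <= n)%N ->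
  (fpstr (fpsmul f g) n)`_i = (fpstr f n * fpstr g n)`_i.
Proof.
move=> H; rewrite fpstr_coef //=; apply: coefM_agree => j Hj;
by rewrite !fpstr_coef // (leq_trans Hj H).
Qed.

Lemma fpsmulA : associative fpsmul.
Proof.
move=> f g h; apply: fpsP => n /=.
rewrite (@coefM_agree _ (fpstr f n) _ (fpstr g n * fpstr h n)) //;
  last by move=> i Hi; rewrite fpstr_mul.
rewrite mulrA; apply: coefM_agree => // i Hi.
by rewrite fpstr_mul.
Qed.

Lemma fpsmulC : commutative fpsmul.
Proof. by move=> f g; apply: fpsP => n /=; rewrite mulrC. Qed.

Lemma fpsmul1 : left_id fps1 fpsmul.
Proof.
move=> f; apply: fpsP => n /=.
rewrite (@coefM_agree _ 1 _ (fpstr f n)) //; last first.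
  by move=> i Hi; rewrite fpstr_coef // coef1.
by rewrite mul1r fpstr_coef.
Qed.

Lemma fpstrD (f g : F) n : fpstr (fpsadd f g) n = fpstr f n + fpstr g n.
Proof. by apply/polyP => i; rewrite coefD !coef_poly; case: ifP; rewrite ?addr0. Qed.

Lemma fpsmulDl : left_distributive fpsmul fpsadd.
Proof. by move=> f g h; apply: fpsP => n /=; rewrite fpstrD mulrDl coefD. Qed.

Lemma fps1_neq0 : fps1 != fps0.
Proof.
apply/eqP => /(congr1 (fun x => fpscoef x 0)) /= /eqP.
by rewrite oner_eq0.
Qed.

HB.instance Definition _ :=
  GRing.Zmodule_isComNzRing.Build F fpsmulA fpsmulC fpsmul1 fpsmulDl fps1_neq0.

Definition fpsunit : {pred F} := [pred f | `[< exists g, g * f = 1 >]].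
Definition fpsinv (f : F) : F :=
  match pselect (exists g, g * f = 1) with
  | left ex => proj1_sig (cid ex)
  | right _ => f
  end.

Lemma fpsmulV : {in fpsunit, left_inverse 1 fpsinv *%R}.
Proof.
move=> f /asboolP Hf; rewrite /fpsinv; case: pselect => // ex.
by case: (cid ex).
Qed.

Lemma fpsunitP : forall x y : F, y * x = 1 -> fpsunit x.
Proof. by move=> x y H; apply/asboolP; exists y. Qed.

Lemma fpsinv_out : {in [predC fpsunit], fpsinv =1 id}.
Proof.
move=> f; rewrite inE /= => /asboolPn Hf; rewrite /fpsinv.
by case: pselect.
Qed.

HB.instance Definition _ :=
  GRing.ComNzRing_hasMulInverse.Build F fpsmulV fpsunitP fpsinv_out.

Definition fpsT : F := FPS (fun n => (n == 1)%:R).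

End FPS.

(** * Arcs in the space M of r x s complex matrices: r x s matrices over C[[t]] *)
Notation Ct := (fps Cplx).
Definition arc (r s : nat) := 'M[Ct]_(r, s).

(** The G_infty = GL_r(C[[t]]) x GL_s(C[[t]]) action (g,h).A = g A h^{-1}. *)
Definition Gact (r s : nat) (g : 'M[Ct]_r) (h : 'M[Ct]_s) (A : 'M[Ct]_(r, s)) :
  'M[Ct]_(r, s) := g *m A *m invmx h.

Definition minor_of (r s k : nat) (A : 'M[Ct]_(r, s))
  (rw : 'I_k.+1 -> 'I_r) (cl : 'I_k.+1 -> 'I_s) : Ct :=
  \det (mxsub rw cl A).

Definition incr_map (n m : nat) (f : 'I_n -> 'I_m) : Prop :=
  forall i j : 'I_n, (i < j)%N -> (f i < f j)%N.

(** gamma^* I_{D_k}: the ideal of C[[t]] generated by the (k+1)-minors of gamma *)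
Definition pullback_ideal (r s k : nat) (A : 'M[Ct]_(r, s)) (x : Ct) : Prop :=
  exists (n : nat) (c : 'I_n -> Ct) (rw : 'I_n -> 'I_k.+1 -> 'I_r)
         (cl : 'I_n -> 'I_k.+1 -> 'I_s),
    (forall i, incr_map (rw i)) /\ (forall i, incr_map (cl i)) /\
    x = \sum_(i < n) c i * minor_of A (rw i) (cl i).

Definition tpow_ideal (p : nat) (x : Ct) : Prop := exists u : Ct, x = fpsT _ ^+ p * u.

(** ord_gamma(I_{D_k}) >= p, i.e. gamma^* I_{D_k} = (t^e) with e >= p,
    i.e. gamma^* I_{D_k} is contained in (t^p) (e = infinity when the ideal is 0). *)
Definition Cont_ge (r s k p : nat) (A : 'M[Ct]_(r, s)) : Prop :=
  forall x, pullback_ideal k A x -> tpow_ideal p x.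

(** * Extended naturals N u {infinity}: None = infinity *)
Definition enat := option nat.
Definition ele (a b : enat) : bool :=
  match a, b with
  | _, None => true
  | None, Some _ => false
  | Some m, Some n => (m <= n)%N
  end.
Definition eadd (a b : enat) : enat :=
  match a, b with
  | Some m, Some n => Some (m + n)%N
  | _, _ => None
  end.

(** pre-partitions of length at most r: lambda_1 >= ... >= lambda_r >= 0,
    indexed here by 'I_r (lambda_{i+1} is lam i). *)
Definition prepartition (r : nat) (lam : 'I_r -> enat) : Prop :=
  forall i j : 'I_r, (i <= j)%N -> ele (lam j) (lam i).

(** t^lambda with t^infinity = 0 *)
Definition tpowe (a : enat) : Ct :=
  match a with Some n => fpsT _ ^+ n | None => 0 end.

Definition delta_lam (r s : nat) (lam : 'I_r -> enat) : 'M[Ct]_(r, s) :=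
  \matrix_(i < r, j < s) if (j : nat) == (s - r + i)%N then tpowe (lam i) else 0.

Definition in_Olam (r s : nat) (lam : 'I_r -> enat) (B : 'M[Ct]_(r, s)) : Prop :=
  exists (g : 'M[Ct]_r) (h : 'M[Ct]_s),
    g \in unitmx /\ h \in unitmx /\ B = Gact g h (delta_lam s lam).

(** lambda_{r-k} + ... + lambda_r  (1-based), i.e. 0-based indices i >= r-k-1 *)
Definition tail_sum (r k : nat) (lam : 'I_r -> enat) : enat :=
  \big[eadd/Some 0%N]_(i < r | (r - k.+1 <= i)%N) lam i.

From HB Require Import structures.
From mathcomp Require Import all_boot all_order all_algebra all_fingroup.
From mathcomp Require Import boolp complex Rstruct.
From mathcomp Require Import zify.

Set Implicit Arguments.
Unset Strict Implicit.
Unset Printing Implicit Defensive.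

Import Order.TTheory GRing.Theory Num.Theory.
Local Open Scope ring_scope.

(* By Cauchy-Binet, every (k+1)-minor of g A h is a C[[t]]-linear combination
   of (k+1)-minors of A, so the ideal of minors, and with it the contact order,
   is G_oo-invariant; hence O_lambda lies in Cont^{>=p}(D_k) iff delta_lambda
   does. The minor of delta_lambda on increasing rows rw and columns is
   t^(lambda_rw(0) + ... + lambda_rw(k)) times a 0/1 minor. Row rw(j) is at most
   r-k-1+j and lambda is non-increasing, so that exponent is at least
   lambda_{r-k} + ... + lambda_r, with equality on the last k+1 rows and
   columns, where the 0/1 minor is 1. *)

Lemma exists_perm_incr_map q m (f : 'I_q -> 'I_m) : injective f ->
  exists s : 'S_q, incr_map (f \o s).
Proof.
move=> inj_f.
pose W (s : 'S_q) := (\sum_(i < q) i * f (s i))%N.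
have [s _ s_max] := @arg_maxnP _ 1%g xpredT W isT.
exists s => i j lt_ij /=.
have : f (s i) != f (s j).
  by apply: contraTneq lt_ij => /inj_f /perm_inj ->; rewrite ltnn.
rewrite neq_ltn => /orP [//|lt_ji]; exfalso.
(* Otherwise swapping i and j increases W (rearrangement inequality). *)
have neq_ij : i != j by rewrite -val_eqE /= ltn_eqF.
set rest := (\sum_(l < q | (l != i) && (l != j)) l * f (s l))%N.
have W_s : W s = (i * f (s i) + (j * f (s j) + rest))%N.
  by rewrite /W (bigD1 i) // (bigD1 j) //= eq_sym.
have W_swap : W (tperm i j * s)%g = (i * f (s j) + (j * f (s i) + rest))%N.
  rewrite /W (bigD1 i) // (bigD1 j) /=; last by rewrite eq_sym.
  rewrite !permM tpermL tpermR; congr (_ + (_ + _))%N.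
  by apply: eq_bigr => l /andP [li lj]; rewrite permM tpermD // eq_sym.
have := s_max (tperm i j * s)%g isT; rewrite W_s W_swap.
move: lt_ji lt_ij; set a := nat_of_ord (f (s i)); set b := nat_of_ord (f (s j)).
move: (nat_of_ord i) (nat_of_ord j) => x y lt_ba lt_xy.
have : (0 < (y - x) * (a - b))%N by rewrite muln_gt0 !subn_gt0 lt_xy lt_ba.
nia.
Qed.

Lemma incr_map_bound q n (f : 'I_q -> 'I_n) : incr_map f ->
  forall j : 'I_q, (f j + (q - j) <= n)%N.
Proof.
move=> incr_f j; move Hd : (q - j)%N => d.
elim: d j Hd => [|d IHd] j Hd; first by have := ltn_ord j; lia.
have [-> | d_gt0] := posnP d; first by rewrite addn1.
have lt_j1q : (j.+1 < q)%N by lia.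
have le_next : (f (Ordinal lt_j1q) + d <= n)%N by apply: IHd => /=; lia.
have := incr_f j (Ordinal lt_j1q) (ltnSn j); lia.
Qed.

Lemma big_ord_geq (R : Type) (idx : R) (op : Monoid.law idx) m q n
    (e : (m + q = n)%N) (F : 'I_n -> R) (G : 'I_q -> 'I_n) :
  (forall j, val (G j) = (m + j)%N) ->
  \big[op/idx]_(i < n | (m <= i)%N) F i = \big[op/idx]_(j < q) F (G j).
Proof.
case: n / e in F G * => G_val.
rewrite big_split_ord big_pred0 => [|i]; last by rewrite /= leqNgt ltn_ord.
rewrite Monoid.mul1m; apply: eq_big => [j | j _]; first by rewrite /= leq_addr.
by congr F; apply: val_inj; rewrite /= G_val.
Qed.

Section IdealOfMinors.
Variable R : comPzRingType.
Variable I : R -> Prop.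
Hypothesis I0 : I 0.
Hypothesis ID : forall x y, I x -> I y -> I (x + y).
Hypothesis IM : forall c y, I y -> I (c * y).

Lemma ideal_sum (J : finType) (F : J -> R) : (forall j, I (F j)) -> I (\sum_j F j).
Proof. by move=> IF; elim/big_ind: _. Qed.

Lemma ideal_det_mxsub q m n (A : 'M[R]_(m, n)) :
  (forall (rw : 'I_q -> 'I_m) (cl : 'I_q -> 'I_n), incr_map rw -> incr_map cl ->
     I (\det (mxsub rw cl A))) ->
  forall (rw : 'I_q -> 'I_m) (cl : 'I_q -> 'I_n), I (\det (mxsub rw cl A)).
Proof.
move=> I_incr rw cl.
have [inj_rw|] := boolP (injectiveb rw); last first.
  case/injectivePn => x [y neq_xy eq_rw].
  by rewrite (determinant_alternate neq_xy) // => c; rewrite !mxE eq_rw.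
have [inj_cl|] := boolP (injectiveb cl); last first.
  case/injectivePn => x [y neq_xy eq_cl].
  by rewrite -det_tr (determinant_alternate neq_xy) // => c; rewrite !mxE eq_cl.
have [s incr_s] := exists_perm_incr_map (injectiveP _ inj_rw).
have [t incr_t] := exists_perm_incr_map (injectiveP _ inj_cl).
have -> : mxsub rw cl A = row_perm s^-1 (col_perm t^-1 (mxsub (rw \o s) (cl \o t) A)).
  by apply/matrixP => i j; rewrite !mxE /= !permKV.
rewrite row_permE col_permE invgK !det_mulmx mulrA mulrAC.
exact/IM/I_incr.
Qed.

Lemma det_mulmx_sum_rowsub q m (X : 'M[R]_(q, m)) (B : 'M[R]_(m, q)) :
  \det (X *m B) =
  \sum_(f : {ffun 'I_q -> 'I_m}) (\prod_i X i (f i)) * \det (rowsub f B).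
Proof.
rewrite /determinant.
under eq_bigr => s _ do under eq_bigr => i _ do rewrite mxE.
under eq_bigr => s _ do rewrite bigA_distr_bigA big_distrr.
rewrite exchange_big /=; apply: eq_bigr => f _.
rewrite big_distrr /=; apply: eq_bigr => s _.
rewrite mulrCA; congr (_ * _); rewrite -big_split /=.
by apply: eq_bigr => i _; rewrite mxE.
Qed.

Lemma ideal_det_mulmx q m (X : 'M[R]_(q, m)) (B : 'M[R]_(m, q)) :
  (forall f : 'I_q -> 'I_m, I (\det (rowsub f B))) -> I (\det (X *m B)).
Proof.
by move=> I_B; rewrite det_mulmx_sum_rowsub; apply: ideal_sum => f; apply/IM/I_B.
Qed.

Lemma ideal_det_mxsub_mulmx q m1 m n n1
    (P : 'M[R]_(m1, m)) (A : 'M[R]_(m, n)) (Q : 'M[R]_(n, n1)) :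
  (forall (rw : 'I_q -> 'I_m) (cl : 'I_q -> 'I_n), incr_map rw -> incr_map cl ->
     I (\det (mxsub rw cl A))) ->
  forall (rw : 'I_q -> 'I_m1) (cl : 'I_q -> 'I_n1),
    I (\det (mxsub rw cl (P *m A *m Q))).
Proof.
move=> I_incr rw cl; rewrite -mulmxA mxsub_mul; apply: ideal_det_mulmx => f.
rewrite -mxsubrc mxsub_mul -det_tr trmx_mul; apply: ideal_det_mulmx => g.
have -> : rowsub g (rowsub f A)^T = (mxsub f g A)^T by apply/matrixP => i j; rewrite !mxE.
by rewrite det_tr; apply: ideal_det_mxsub.
Qed.

End IdealOfMinors.

Lemma coef_fpsTXM (K : fieldType) p (u : fps K) n :
  fpscoef (fpsT K ^+ p * u) n = if (n < p)%N then 0 else fpscoef u (n - p).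
Proof.
elim: p n => [|p IHp] n; first by rewrite expr0 mul1r subn0.
rewrite exprS -mulrA.
have -> : fpscoef (fpsT K * (fpsT K ^+ p * u)) n =
          ('X * fpstr (fpsT K ^+ p * u) n)`_n.
  by apply: coefM_agree => // i le_in; rewrite fpstr_coef // coefX.
by rewrite coefXM; case: n => [|n] //=; rewrite fpstr_coef // IHp.
Qed.

Lemma tpow_ideal0 p : tpow_ideal p 0.
Proof. by exists 0; rewrite mulr0. Qed.

Lemma tpow_idealD p x y : tpow_ideal p x -> tpow_ideal p y -> tpow_ideal p (x + y).
Proof. by case=> u -> [v ->]; exists (u + v); rewrite mulrDr. Qed.

Lemma tpow_idealM p c y : tpow_ideal p y -> tpow_ideal p (c * y).
Proof. by case=> u ->; exists (c * u); rewrite mulrCA. Qed.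

Lemma tpow_ideal_exprn p n : tpow_ideal p (fpsT Cplx ^+ n) -> (p <= n)%N.
Proof.
case=> u tn_eq; rewrite leqNgt; apply/negP => lt_np.
have := congr1 (fun f : Ct => fpscoef f n) tn_eq; rewrite coef_fpsTXM lt_np.
rewrite -[fpsT Cplx ^+ n]mulr1 coef_fpsTXM ltnn subnn /=.
by move/eqP; rewrite oner_eq0.
Qed.

Lemma Cont_geP r s k p (A : 'M[Ct]_(r, s)) :
  Cont_ge k p A <->
  (forall (rw : 'I_k.+1 -> 'I_r) (cl : 'I_k.+1 -> 'I_s), incr_map rw -> incr_map cl ->
     tpow_ideal p (\det (mxsub rw cl A))).
Proof.
split=> [cont_A rw cl incr_rw incr_cl | minors_A x].
  apply: cont_A; exists 1%N, (fun _ => 1), (fun _ => rw), (fun _ => cl).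
  by do 2!split=> //; rewrite big_ord1 mul1r.
case=> n [c [rw [cl [incr_rw [incr_cl ->]]]]].
apply: (ideal_sum (@tpow_ideal0 p) (@tpow_idealD p)) => i.
exact/tpow_idealM/minors_A.
Qed.

Lemma Cont_ge_mulmx r1 r s s1 k p
    (P : 'M[Ct]_(r1, r)) (A : 'M[Ct]_(r, s)) (Q : 'M[Ct]_(s, s1)) :
  Cont_ge k p A -> Cont_ge k p (P *m A *m Q).
Proof.
move/Cont_geP => minors_A; apply/Cont_geP => rw cl _ _.
exact: (ideal_det_mxsub_mulmx (@tpow_ideal0 p) (@tpow_idealD p) (@tpow_idealM p)).
Qed.

Lemma eaddA : associative eadd.
Proof. by case=> [a|] [b|] [c|] //=; rewrite addnA. Qed.

Lemma eaddC : commutative eadd.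
Proof. by case=> [a|] [b|] //=; rewrite addnC. Qed.

Lemma add0e : left_id (Some 0%N) eadd.
Proof. by case. Qed.

HB.instance Definition _ := Monoid.isComLaw.Build enat (Some 0%N) eadd eaddA eaddC add0e.

Lemma ele_trans : transitive ele.
Proof. by case=> [b|] [a|] [c|] //=; apply: leq_trans. Qed.

Lemma ele_add a b c d : ele a b -> ele c d -> ele (eadd a c) (eadd b d).
Proof. by case: a b c d => [a|] [b|] [c|] [d|] //=; apply: leq_add. Qed.

Lemma tpowe_add a b : tpowe (eadd a b) = tpowe a * tpowe b.
Proof. by case: a b => [m|] [n|] /=; rewrite ?exprD ?mul0r ?mulr0. Qed.

Lemma tpowe_idealP p e : tpow_ideal p (tpowe e) <-> ele (Some p) e.
Proof.
case: e => [n|] /=; last by split=> // _; apply: tpow_ideal0.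
split; first exact: tpow_ideal_exprn.
by move=> le_pn; exists (fpsT _ ^+ (n - p)); rewrite -exprD subnKC.
Qed.

Definition shifted_id_mx (R : pzSemiRingType) r s : 'M[R]_(r, s) :=
  \matrix_(i < r, j < s) ((j : nat) == (s - r + i)%N)%:R.

Lemma det_mxsub_delta_lam r s k (lam : 'I_r -> enat)
    (rw : 'I_k.+1 -> 'I_r) (cl : 'I_k.+1 -> 'I_s) :
  \det (mxsub rw cl (delta_lam s lam)) =
  tpowe (\big[eadd/Some 0%N]_j lam (rw j)) * \det (mxsub rw cl (shifted_id_mx Ct r s)).
Proof.
have -> : mxsub rw cl (delta_lam s lam) =
          diag_mx (\row_j tpowe (lam (rw j))) *m mxsub rw cl (shifted_id_mx Ct r s).
  by apply/matrixP => i j; rewrite mul_diag_mx !mxE; case: ifP; rewrite ?mulr1 ?mulr0.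
rewrite det_mulmx det_diag (big_morph tpowe tpowe_add (expr0 _ : tpowe (Some 0%N) = 1)).
by under eq_bigr do rewrite mxE.
Qed.

Section TailMinor.
Variables (r s k : nat).
Hypotheses (hrs : (r <= s)%N) (hkr : (k < r)%N).

Lemma tail_ord_subproof n (j : 'I_k.+1) : (k < n)%N -> (n - k.+1 + j < n)%N.
Proof. by have := ltn_ord j; lia. Qed.

Definition tail_ord n (hkn : (k < n)%N) (j : 'I_k.+1) : 'I_n :=
  Ordinal (tail_ord_subproof j hkn).

Let hks : (k < s)%N := leq_trans hkr hrs.

Lemma incr_map_tail_ord n (hkn : (k < n)%N) : incr_map (tail_ord hkn).
Proof. by move=> i j /= lt_ij; lia. Qed.

Lemma tail_sumE (lam : 'I_r -> enat) :
  tail_sum k lam = \big[eadd/Some 0%N]_(j < k.+1) lam (tail_ord hkr j).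
Proof. by apply: big_ord_geq => //; lia. Qed.

Lemma mxsub_tail_shifted_id_mx :
  mxsub (tail_ord hkr) (tail_ord hks) (shifted_id_mx Ct r s) = 1%:M.
Proof.
apply/matrixP => i j; rewrite !mxE /=.
have -> : (s - k.+1 + j == s - r + (r - k.+1 + i))%N = (i == j).
  by apply/eqP/eqP => [eq_ij | ->]; [apply: val_inj => /=; lia | lia].
by [].
Qed.

Lemma det_tail_delta_lam (lam : 'I_r -> enat) :
  \det (mxsub (tail_ord hkr) (tail_ord hks) (delta_lam s lam)) = tpowe (tail_sum k lam).
Proof.
by rewrite det_mxsub_delta_lam mxsub_tail_shifted_id_mx det1 mulr1 tail_sumE.
Qed.

Lemma tail_sum_le (lam : 'I_r -> enat) (rw : 'I_k.+1 -> 'I_r) :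
  prepartition lam -> incr_map rw ->
  ele (tail_sum k lam) (\big[eadd/Some 0%N]_j lam (rw j)).
Proof.
move=> part_lam incr_rw; rewrite tail_sumE.
apply: (big_ind2 ele) => [//|a b c d|j _]; first exact: ele_add.
apply: part_lam => /=; have := incr_map_bound incr_rw j; have := ltn_ord j; lia.
Qed.

Lemma Cont_ge_delta_lam p (lam : 'I_r -> enat) : prepartition lam ->
  Cont_ge k p (delta_lam s lam) <-> ele (Some p) (tail_sum k lam).
Proof.
move=> part_lam; split => [/Cont_geP cont_delta | le_p_tail].
  apply/tpowe_idealP; rewrite -det_tail_delta_lam.
  exact/cont_delta/incr_map_tail_ord/incr_map_tail_ord.
apply/Cont_geP => rw cl incr_rw _.
rewrite det_mxsub_delta_lam mulrC; apply/tpow_idealM/tpowe_idealP.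
exact: ele_trans le_p_tail (tail_sum_le part_lam incr_rw).
Qed.

End TailMinor.

Lemma in_Olam_delta_lam r s (lam : 'I_r -> enat) : in_Olam lam (delta_lam s lam).
Proof.
exists 1%:M, 1%:M; split; first exact: unitmx1.
split; first exact: unitmx1.
by rewrite /Gact invmx1 mul1mx mulmx1.
Qed.

Lemma Cont_ge_Gact r s k p (g : 'M[Ct]_r) (h : 'M[Ct]_s) (A : 'M[Ct]_(r, s)) :
  Cont_ge k p A -> Cont_ge k p (Gact g h A).
Proof. exact: Cont_ge_mulmx. Qed.

Theorem proposition3p3 (r s k p : nat) (hrs : (r <= s)%N) (hkr : (k < r)%N) :
  (forall (g : 'M[Ct]_r) (h : 'M[Ct]_s) (A : 'M[Ct]_(r, s)),
      g \in unitmx -> h \in unitmx ->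
      Cont_ge k p A -> Cont_ge k p (Gact g h A))
  /\
  (forall lam : 'I_r -> enat, prepartition lam ->
      ((forall B : 'M[Ct]_(r, s), in_Olam lam B -> Cont_ge k p B)
       <-> ele (Some p) (tail_sum k lam))).
Proof.
split=> [g h A _ _ | lam part_lam]; first exact: Cont_ge_Gact.
apply: iff_trans (Cont_ge_delta_lam hrs hkr p part_lam).
split=> [cont_orbit | cont_delta B [g [h [_ [_ ->]]]]].
  exact/cont_orbit/in_Olam_delta_lam.
exact: Cont_ge_Gact.
Qed.
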